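(* Let $V$ be a $\mathbb{Z}$-graded vertex algebra with $V=C_2(V)$. If a weak $V$-module $M$ is completely reducible, then $M=\widetilde{C}_2(M)$.
   Context: A $\mathbb{Z}$-graded vertex algebra is a vertex algebra $V=\bigoplus_{n\in\mathbb{Z}}V_n$ with a conformal vector $\omega\in V_2$ whose modes $L(n)$ (where $Y(\omega,z)=\sum_nL(n)z^{-n-2}$) satisfy the Virasoro relations, with $L(0)$ acting on $V_n$ as $n$ and $Y(L(-1)v,z)=\frac{d}{dz}Y(v,z)$. Modes: $Y(v,z)=\sum_n v_nz^{-n-1}$. $C_2(V)=\mathrm{Span}_{\mathbb{C}}\{u_{-2}v\mid u,v\in V\}$; for a weak $V$-module $M$, $\widetilde{C}_2(M)=\mathrm{Span}_{\mathbb{C}}\{u_{-2}w\mid u\in V,\ w\in M\}$. A weak $V$-module is completely reducible if it is a direct sum of finitely many irreducible weak $V$-modules (irreducible meaning no weak submodules other than $0$ and itself). *)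

From HB Require Import structures.
From mathcomp Require Import all_boot all_order all_algebra.
Set Implicit Arguments. Unset Strict Implicit. Unset Printing Implicit Defensive.
Import Order.TTheory GRing.Theory Num.Theory.
Local Open Scope ring_scope.

(* Generalized binomial coefficient binom(p, i) for p : int, i : nat,
   as an integer: binom(n,i) = C(n,i) for n >= 0 and
   binom(-(k+1), i) = (-1)^i C(k+i, i). *)
Definition binz (p : int) (i : nat) : int :=
  match p with
  | Posz n => ('C(n, i))%:Z
  | Negz k => (-1) ^+ i * ('C(k + i, i))%:Z
  end.

Definition sgnz (r : int) : int := (-1) ^+ `|r|%N.

Section VA.
Variables (K : fieldType) (V : lmodType K).

(* Modes: Y u n w = u_n w, where Y(u,z) = sum_n u_n z^{-n-1}. *)

Definition bilinear_modes (M : lmodType K) (Y : V -> int -> M -> M) : Prop :=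
  (forall (a : K) u u' n w, Y (a *: u + u') n w = a *: Y u n w + Y u' n w) /\
  (forall (a : K) u n w w', Y u n (a *: w + w') = a *: Y u n w + Y u n w').

Definition truncation (M : lmodType K) (Y : V -> int -> M -> M) : Prop :=
  forall u w, exists N : int, forall n, N <= n -> Y u n w = 0.

Definition vacuum_property (M : lmodType K) (Y : V -> int -> M -> M) (vac : V) :=
  forall n w, Y vac n w = if n == -1 then w else 0.

(* Jacobi identity in component (Borcherds) form: for all u v in V, w in M,
   p q r in Z,
   sum_{i>=0} binom(p,i) (u_{r+i} v)_{p+q-i} w
     = sum_{i>=0} (-1)^i binom(r,i) (u_{p+r-i} v_{q+i} w
                                     - (-1)^r v_{q+r-i} u_{p+i} w).
   Both sums are finite by truncation; we state that the partial sums agree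
   for all sufficiently large cut-offs. *)
Definition jacobi (Y : V -> int -> V -> V) (M : lmodType K)
    (YM : V -> int -> M -> M) : Prop :=
  forall (u v : V) (w : M) (p q r : int),
    exists N : nat, forall B : nat, (N <= B)%N ->
      \sum_(i < B) (YM (Y u (r + (i : nat)%:Z) v) (p + q - (i : nat)%:Z) w) *~ binz p i
      = \sum_(i < B)
          ((YM u (p + r - (i : nat)%:Z) (YM v (q + (i : nat)%:Z) w)
            - (YM v (q + r - (i : nat)%:Z) (YM u (p + (i : nat)%:Z) w)) *~ sgnz r)
           *~ ((-1) ^+ (i : nat) * binz r i)).

Definition subspace (M : lmodType K) (W : M -> Prop) : Prop :=
  W 0 /\ forall (a : K) x y, W x -> W y -> W (a *: x + y).

Definition is_Zgraded_VA (Y : V -> int -> V -> V) (vac omega : V)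
    (Vg : int -> V -> Prop) : Prop :=
  let L := fun m : int => Y omega (m + 1) in
  bilinear_modes Y /\ truncation Y /\ vacuum_property Y vac /\
  (forall v n, 0 <= n -> Y v n vac = 0) /\ (forall v, Y v (-1) vac = v) /\
  jacobi Y Y /\
  (forall n, subspace (Vg n)) /\
  (forall v, exists (s : seq int) (f : int -> V),
      (forall n, Vg n (f n)) /\ v = \sum_(n <- s) f n) /\
  (forall (s : seq int) (f : int -> V), uniq s -> (forall n, Vg n (f n)) ->
      \sum_(n <- s) f n = 0 -> forall n, n \in s -> f n = 0) /\
  Vg 2 omega /\
  (exists c : K, forall (m n : int) (v : V),
      L m (L n v) - L n (L m v)
      = (L (m + n) v) *~ (m - n)
        + (if m + n == 0 then (((m ^+ 3 - m)%:~R / 12%:R) * c) *: v else 0)) /\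
  (forall (n : int) v, Vg n v -> L 0 v = n%:~R *: v) /\
  (forall v (n : int) w, Y (L (-1) v) n w = - ((Y v (n - 1) w) *~ n)).

Definition is_weak_module (Y : V -> int -> V -> V) (vac : V) (M : lmodType K)
    (YM : V -> int -> M -> M) : Prop :=
  bilinear_modes YM /\ truncation YM /\ vacuum_property YM vac /\ jacobi Y YM.

Definition weak_submodule (M : lmodType K) (YM : V -> int -> M -> M)
    (W : M -> Prop) : Prop :=
  subspace W /\ forall u n w, W w -> W (YM u n w).

Definition irreducible_sub (M : lmodType K) (YM : V -> int -> M -> M)
    (W : M -> Prop) : Prop :=
  weak_submodule YM W /\
  forall N : M -> Prop, weak_submodule YM N -> (forall x, N x -> W x) ->
    (forall x, N x -> x = 0) \/ (forall x, N x <-> W x).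

Definition completely_reducible (M : lmodType K) (YM : V -> int -> M -> M) :=
  exists (k : nat) (W : 'I_k -> M -> Prop),
    (forall i, irreducible_sub YM (W i)) /\
    (forall m, exists f : 'I_k -> M, (forall i, W i (f i)) /\ m = \sum_i f i) /\
    (forall f : 'I_k -> M, (forall i, W i (f i)) -> \sum_i f i = 0 ->
        forall i, f i = 0).

End VA.

Definition inspan (K : fieldType) (M : lmodType K) (S : M -> Prop) (x : M) :=
  exists s : seq (K * M), (forall p, p \in s -> S p.2) /\
    x = \sum_(p <- s) p.1 *: p.2.

Definition C2 (K : fieldType) (V : lmodType K) (Y : V -> int -> V -> V) :=
  inspan (fun y => exists u v, y = Y u (-2) v).

Definition C2t (K : fieldType) (V M : lmodType K) (YM : V -> int -> M -> M) :=
  inspan (fun y => exists (u : V) (w : M), y = YM u (-2) w).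

From HB Require Import structures.
From mathcomp Require Import all_boot all_order all_algebra zify.
Import Order.TTheory GRing.Theory Num.Theory.
Local Open Scope ring_scope.

(* If V = C_2(V) then every weak V-module M satisfies M = C~_2(M).  The argument:
   1. (Translation)  The vacuum gives L(-1)u = u_{-2}1, and the Jacobi identity
      with p = 0 yields (u_{-2}1)_{-n-1} = (n+1) u_{-n-2} on M.  In
      characteristic 0 this expresses every mode u_{-n-2} (n >= 0) through a
      mode of order -n-1 of another vector, so by induction all modes
      u_{-n-2} w lie in C~_2(M).
   2. (Generators)  The Jacobi identity with p = 0, q = -1, r = -2 writes
      (u_{-2}v)_{-1} w as a finite combination of u_{-2-i} v_{i-1} w and
      v_{-3-i} u_i w, which lie in C~_2(M) by step 1.
   3. (Conclusion)  By linearity, v_{-1} w is in C~_2(M) for all v in C_2(V);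
      as 1 in V = C_2(V) and 1_{-1} w = w, every w is in C~_2(M). *)

Section Span.
Variables (K : fieldType) (M : lmodType K) (S : M -> Prop).

Lemma inspan0 : inspan S 0.
Proof. by exists [::]; split => //; rewrite big_nil. Qed.

Lemma inspan1 x : S x -> inspan S x.
Proof.
move=> Sx; exists [:: (1, x)]; split; first by move=> p; rewrite inE => /eqP ->.
by rewrite big_seq1 scale1r.
Qed.

Lemma inspanD x y : inspan S x -> inspan S y -> inspan S (x + y).
Proof.
move=> [s [Hs ->]] [t [Ht ->]]; exists (s ++ t); split; last by rewrite big_cat.
by move=> p; rewrite mem_cat => /orP [/Hs|/Ht].
Qed.

Lemma inspanZ a x : inspan S x -> inspan S (a *: x).
Proof.
move=> [s [Hs ->]]; exists [seq (a * p.1, p.2) | p <- s]; split.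
  by move=> p /mapP [q /Hs Hq ->].
by rewrite big_map scaler_sumr; apply: eq_bigr => p _; rewrite scalerA.
Qed.

Lemma inspanMz x z : inspan S x -> inspan S (x *~ z).
Proof. by rewrite -scaler_int; apply: inspanZ. Qed.

Lemma inspanB x y : inspan S x -> inspan S y -> inspan S (x - y).
Proof. by move=> Sx Sy; rewrite -scaleN1r; apply/inspanD/inspanZ. Qed.

Lemma inspan_sum (I : Type) (r : seq I) (P : pred I) (F : I -> M) :
  (forall i, P i -> inspan S (F i)) -> inspan S (\sum_(i <- r | P i) F i).
Proof. by move=> SF; apply: big_ind => //; [exact: inspan0 | exact: inspanD]. Qed.
End Span.

Section WeakModule.
Variables (K : fieldType) (V : lmodType K) (Y : V -> int -> V -> V) (vac : V).
Variables (M : lmodType K) (YM : V -> int -> M -> M).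
Hypothesis YM_bilinear : bilinear_modes YM.
Hypothesis YM_vacuum : vacuum_property YM vac.
Hypothesis YM_jacobi : jacobi Y YM.

Lemma YM_zerol n w : YM 0 n w = 0.
Proof. by have := YM_bilinear.1 (-1) 0 0 n w; rewrite scaler0 add0r scaleN1r addNr. Qed.

Lemma YM_zeror u n : YM u n 0 = 0.
Proof. by have := YM_bilinear.2 (-1) u n 0 0; rewrite scaler0 add0r scaleN1r addNr. Qed.

Lemma YM_addl u u' n w : YM (u + u') n w = YM u n w + YM u' n w.
Proof. by have := YM_bilinear.1 1 u u' n w; rewrite !scale1r. Qed.

Lemma YM_scalel a u n w : YM (a *: u) n w = a *: YM u n w.
Proof. by have := YM_bilinear.1 a u 0 n w; rewrite !addr0 YM_zerol addr0. Qed.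

(* The Jacobi identity with p = 0: since binom(0, i) = [i == 0], its left-hand
   side collapses to the single term (u_r v)_q w. *)
Lemma jacobi_p0 u v w (q r : int) :
  exists N : nat, forall B : nat, (N <= B)%N ->
    YM (Y u r v) q w
    = \sum_(i < B)
        ((YM u (r - i%:Z) (YM v (q + i%:Z) w)
          - (YM v (q + r - i%:Z) (YM u i%:Z w)) *~ sgnz r)
         *~ ((-1) ^+ i * binz r i)).
Proof.
have [N HN] := YM_jacobi u v w 0 q r.
exists N.+1 => -[//|B] leNB; have := HN B.+1 (ltnW leNB).
rewrite big_ord_recl big1 => [|i _]; last by rewrite /binz /= mulr0z.
by rewrite /binz /= !add0r subr0 !addr0 mulr1z.
Qed.

(* Translation covariance on negative modes: u_{-2}1 = L(-1)u and
   (L(-1)u)_{-n-1} = (n+1) u_{-n-2}. *)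
Lemma translation_mode u (n : nat) w :
  YM (Y u (-2) vac) (- (n.+1)%:Z) w = YM u (- (n.+2)%:Z) w *~ (n.+1)%:Z.
Proof.
have [N HN] := jacobi_p0 u vac w (- (n.+1)%:Z) (-2).
have ltnB : (n < N + n.+1)%N by lia.
have vac_hit (i : nat) : (- (n.+1)%:Z + i%:Z == -1) = (i == n).
  by apply/eqP/eqP; lia.
have vac_miss (i : nat) : (- (n.+1)%:Z + -2 - i%:Z == -1) = false.
  by apply/eqP; lia.
rewrite (HN (N + n.+1) (leq_addr _ _)) (bigD1 (Ordinal ltnB)) //= big1 => [|i /negbTE ni].
  rewrite !YM_vacuum vac_hit vac_miss eqxx mul0rz subr0 addr0.
  have -> : -2 - n%:Z = - (n.+2)%:Z by lia.
  by rewrite mulrA -exprMn mulrNN mulr1 expr1n mul1r add1n binSn.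
have i_neq_n : (i == n :> nat) = false.
  by apply: contraFF ni => /eqP Hi; apply/eqP/val_inj.
by rewrite !YM_vacuum vac_hit vac_miss i_neq_n YM_zeror mul0rz subr0 mul0rz.
Qed.

Hypothesis charK : [pchar K] =i pred0.

Lemma low_mode_in_C2t (n : nat) u w : C2t YM (YM u (- (n.+2)%:Z) w).
Proof.
elim: n u w => [|n IHn] u w; first by apply: inspan1; exists u, w.
have nz : ((n.+2)%:R : K) != 0 by rewrite ((pcharf0P K).1 charK).
have -> : YM u (- (n.+3)%:Z) w
        = (n.+2)%:R^-1 *: YM (Y u (-2) vac) (- (n.+2)%:Z) w.
  by rewrite translation_mode -scaler_int scalerA /= mulVf // scale1r.
exact/inspanZ/IHn.
Qed.

Lemma C2_generator_mode u v w : C2t YM (YM (Y u (-2) v) (-1) w).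
Proof.
have [N HN] := jacobi_p0 u v w (-1) (-2).
rewrite (HN N (leqnn N)); apply: inspan_sum => i _.
have -> : -2 - i%:Z = - (i.+2)%:Z by lia.
have -> : -1 + -2 - i%:Z = - (i.+3)%:Z by lia.
by apply/inspanMz/inspanB/inspanMz; apply: low_mode_in_C2t.
Qed.

Lemma C2_mode_minus1 v w : C2 Y v -> C2t YM (YM v (-1) w).
Proof.
move=> [s [Ss ->]].
rewrite (big_morph (fun x => YM x (-1) w) (fun x y => YM_addl x y (-1) w) (YM_zerol _ _)).
rewrite big_seq; apply: inspan_sum => p /Ss [u [u' ->]].
by rewrite YM_scalel; apply/inspanZ/C2_generator_mode.
Qed.

End WeakModule.

Theorem corollary2p14 (K : fieldType) (charK : [pchar K] =i pred0)
  (V : lmodType K) (Y : V -> int -> V -> V) (vac omega : V)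
  (Vg : int -> V -> Prop) :
  is_Zgraded_VA Y vac omega Vg ->
  (forall v : V, C2 Y v) ->
  forall (M : lmodType K) (YM : V -> int -> M -> M),
    is_weak_module Y vac YM ->
    completely_reducible YM ->
    forall m : M, C2t YM m.
Proof.
move=> _ V_C2 M YM [YM_bilinear [_ [YM_vacuum YM_jacobi]]] _ m.
have -> : m = YM vac (-1) m by rewrite YM_vacuum.
exact: C2_mode_minus1 (V_C2 vac).
Qed.
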